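(* Let $\Omega$ be a domain in $\mathbb R^n$, $n\ge3$, and let $(f,\Gamma)$ satisfy the standing structural assumptions. Assume that $0<v\in USC(\Omega)$ is a viscosity sub-solution of $f(\lambda(-A^u))=1$ in $\Omega$. Then for all $x\in\Omega$, $$\mathrm{dist}(x,\partial\Omega)^{\frac{n-2}{2}}v(x)\le\alpha,$$ where $\alpha=\alpha(f)$ is the constant of the canonical solutions.
   Context: Let $n\ge3$. For a positive $C^2$ function $u$, its conformal Hessian is $A^u=-\frac{2}{n-2}u^{-\frac{n+2}{n-2}}\nabla^2u+\frac{2n}{(n-2)^2}u^{-\frac{2n}{n-2}}\nabla u\otimes\nabla u-\frac{2}{(n-2)^2}u^{-\frac{2n}{n-2}}|\nabla u|^2I$, and $\lambda(-A^u)$ is the vector of eigenvalues of $-A^u$. Let $\Gamma_n=\{\mu:\mu_i>0\ \forall i\}$. Standing structural assumptions on $(f,\Gamma)$: $\Gamma\subset\mathbb R^n$ is an open symmetric cone with vertex at the origin, $\Gamma+\Gamma_n\subset\Gamma$; $f\in C^0(\bar\Gamma)$ symmetric, $f>0$ in $\Gamma$, $f=0$ on $\partial\Gamma$, $f(\lambda+\mu)\ge f(\lambda)$ for $\lambda\in\Gamma,\mu\in\Gamma_n$, $f$ homogeneous of some positive degree. Viscosity sub-solution: $v\in USC(\Omega)$ (upper semicontinuous, values in $\mathbb R\cup\{-\infty\}$) such that for every $x_0\in\Omega$, $\varphi\in C^2(\Omega)$ with $(v-\varphi)(x_0)=0$, $v-\varphi\le0$ near $x_0$, one has $\lambda(-A^\varphi(x_0))\in\bar\Gamma$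 and $f(\lambda(-A^\varphi(x_0)))\ge1$. Canonical solutions: there is a unique constant $\alpha=\alpha(f)>0$ such that for all $R>0$, $x_0\in\mathbb R^n$ the functions $u^{(in)}_{R,x_0}(x)=\alpha\big(\frac{R}{R^2-|x-x_0|^2}\big)^{\frac{n-2}{2}}$ and $u^{(out)}_{R,x_0}(x)=\alpha\big(\frac{R}{|x-x_0|^2-R^2}\big)^{\frac{n-2}{2}}$ satisfy $f(\lambda(-A^{u}))=1$ in $B_R(x_0)$ and in $\mathbb R^n\setminus\bar B_R(x_0)$ respectively. *)

From mathcomp Require Import ssreflect ssrfun ssrbool eqtype ssrnat seq
  choice fintype bigop finfun fingroup perm.
From Stdlib Require Import Reals.

Set Implicit Arguments.
Unset Strict Implicit.

Local Open Scope R_scope.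

Definition pt (n : nat) := 'I_n -> R.
Definition mat (n : nat) := 'I_n -> 'I_n -> R.

Definition rsum (n : nat) (F : 'I_n -> R) : R := \big[Rplus/R0]_(i < n) F i.

Definition dot n (x y : pt n) : R := rsum (fun i => x i * y i).
Definition norm n (x : pt n) : R := sqrt (dot x x).
Definition pdist n (x y : pt n) : R := norm (fun i => x i - y i).

Definition ptadd n (x y : pt n) : pt n := fun i => x i + y i.
Definition ptscal n (t : R) (x : pt n) : pt n := fun i => t * x i.
Definition e_ n (i : 'I_n) : pt n := fun j => if j == i then 1 else 0.

Definition ball n (x0 : pt n) (r : R) : pt n -> Prop := fun x => pdist x x0 < r.

Definition is_open n (U : pt n -> Prop) : Prop :=
  forall x, U x -> exists r, 0 < r /\ forall y, pdist y x < r -> U y.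

Definition is_connected n (U : pt n -> Prop) : Prop :=
  forall A B : pt n -> Prop, is_open A -> is_open B ->
    (forall x, U x -> A x \/ B x) ->
    (forall x, U x -> A x -> B x -> False) ->
    (exists x, U x /\ A x) -> (exists x, U x /\ B x) -> False.

Definition is_domain n (U : pt n -> Prop) : Prop :=
  (exists x, U x) /\ is_open U /\ is_connected U.

Definition closure n (G : pt n -> Prop) : pt n -> Prop :=
  fun x => forall eps, 0 < eps -> exists y, G y /\ pdist y x < eps.

Definition cont_on n (U : pt n -> Prop) (g : pt n -> R) : Prop :=
  forall x, U x -> forall eps, 0 < eps -> exists d, 0 < d /\
    forall y, U y -> pdist y x < d -> Rabs (g y - g x) < eps.

Definition usc_on n (U : pt n -> Prop) (g : pt n -> R) : Prop :=
  forall x, U x -> forall eps, 0 < eps -> exists d, 0 < d /\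
    forall y, U y -> pdist y x < d -> g y < g x + eps.

Definition partial_is n (u : pt n -> R) (i : 'I_n) (x : pt n) (l : R) : Prop :=
  derivable_pt_lim (fun t => u (ptadd x (ptscal t (e_ i)))) 0 l.

Definition C2_on n (U : pt n -> Prop) (u : pt n -> R)
    (Du : 'I_n -> pt n -> R) (D2u : 'I_n -> 'I_n -> pt n -> R) : Prop :=
  cont_on U u /\
  (forall i x, U x -> partial_is u i x (Du i x)) /\
  (forall i j x, U x -> partial_is (Du i) j x (D2u i j x)) /\
  (forall i, cont_on U (Du i)) /\
  (forall i j, cont_on U (D2u i j)).

Definition mmul n (A B : mat n) : mat n := fun i j => rsum (fun k => A i k * B k j).
Definition mtr n (A : mat n) : mat n := fun i j => A j i.
Definition mid n : mat n := fun i j => if i == j then 1 else 0.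
Definition mdiag n (mu : pt n) : mat n := fun i j => if i == j then mu i else 0.

(* mu is the vector of eigenvalues (in some order, with multiplicity) of the
   symmetric matrix M: M = Q diag(mu) Q^T with Q orthogonal. *)
Definition is_eigvals n (M : mat n) (mu : pt n) : Prop :=
  exists Q : mat n, mmul (mtr Q) Q = @mid n /\
                    M = mmul (mmul Q (mdiag mu)) (mtr Q).

(* A^u at a point where u = u0 > 0, grad u = g, Hessian = H *)
Definition conf_hess n (u0 : R) (g : pt n) (H : mat n) : mat n :=
  let m := INR n in
  fun i j =>
    - (2 / (m - 2)) * Rpower u0 (- ((m + 2) / (m - 2))) * H i j
    + (2 * m / ((m - 2) * (m - 2))) * Rpower u0 (- (2 * m / (m - 2))) * (g i * g j)
    - (2 / ((m - 2) * (m - 2))) * Rpower u0 (- (2 * m / (m - 2))) * dot g g * @mid n i j.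

Definition negA n (u : pt n -> R) (Du : 'I_n -> pt n -> R)
    (D2u : 'I_n -> 'I_n -> pt n -> R) (x : pt n) : mat n :=
  fun i j => - conf_hess (u x) (fun k => Du k x) (fun k l => D2u k l x) i j.

Definition Gamma_n n : pt n -> Prop := fun mu => forall i, 0 < mu i.

Definition permute n (s : {perm 'I_n}) (mu : pt n) : pt n := fun i => mu (s i).

Definition structural n (f : pt n -> R) (G : pt n -> Prop) (deg : R) : Prop :=
  (exists mu, G mu) /\ is_open G /\
  (forall s mu, G mu -> G (permute s mu)) /\
  (forall t mu, 0 < t -> G mu -> G (ptscal t mu)) /\
  (forall mu nu, G mu -> Gamma_n nu -> G (ptadd mu nu)) /\
  cont_on (closure G) f /\
  (forall s mu, closure G mu -> f (permute s mu) = f mu) /\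
  (forall mu, G mu -> 0 < f mu) /\
  (forall mu, closure G mu -> ~ G mu -> f mu = 0) /\
  (forall mu nu, G mu -> Gamma_n nu -> f (ptadd mu nu) >= f mu) /\
  0 < deg /\
  (forall t mu, 0 < t -> closure G mu -> f (ptscal t mu) = Rpower t deg * f mu).

Definition visc_subsol n (f : pt n -> R) (G : pt n -> Prop)
    (Om : pt n -> Prop) (v : pt n -> R) : Prop :=
  forall (x0 : pt n) (phi : pt n -> R) Dphi D2phi,
    Om x0 -> C2_on Om phi Dphi D2phi ->
    v x0 - phi x0 = 0 ->
    (exists d, 0 < d /\ forall y, Om y -> pdist y x0 < d -> v y - phi y <= 0) ->
    exists mu, is_eigvals (negA phi Dphi D2phi x0) mu /\
               closure G mu /\ f mu >= 1.

Definition classical_sol n (f : pt n -> R) (U : pt n -> Prop) (u : pt n -> R) : Prop :=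
  exists Du D2u, C2_on U u Du D2u /\
    forall x, U x -> exists mu, is_eigvals (negA u Du D2u x) mu /\ f mu = 1.

Definition u_in n (alpha Rr : R) (x0 : pt n) : pt n -> R :=
  fun x => alpha * Rpower (Rr / (Rr * Rr - pdist x x0 * pdist x x0)) ((INR n - 2) / 2).

Definition u_out n (alpha Rr : R) (x0 : pt n) : pt n -> R :=
  fun x => alpha * Rpower (Rr / (pdist x x0 * pdist x x0 - Rr * Rr)) ((INR n - 2) / 2).

Definition canonical_const n (f : pt n -> R) (alpha : R) : Prop :=
  0 < alpha /\
  forall (Rr : R) (x0 : pt n), 0 < Rr ->
    classical_sol f (ball x0 Rr) (u_in alpha Rr x0) /\
    classical_sol f (fun x => Rr < pdist x x0) (u_out alpha Rr x0).

(* Suppose [r^m v(x) > alpha], where [m = (n-2)/2] and [B_r(x)] lies in the domain, and pick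
   [Rp < r] with [Rp^m v(x) > alpha]: then [v(x)] exceeds, at the centre, the canonical
   solution [u] of radius [Rp] centred at [x]. Since [u] blows up on the sphere of radius [Rp],
   the maximum of [v / u] over a closed ball of radius [R1 < Rp] close enough to [Rp] is
   attained at an interior point [z], where [c u] with [c = (v / u)(z) > 1] touches [v] from
   above. The matrix [-A^(c u)] is [2 (c alpha)^(-2/m)] times the identity, i.e. [c^(-2/m)]
   times [-A^u], whose eigenvalues satisfy [f = 1]; by homogeneity [f < 1] at [z], which
   contradicts the sub-solution property. *)

From HB Require Import structures.
From mathcomp Require Import ssreflect ssrfun ssrbool eqtype ssrnat seq
  choice fintype bigop finfun fingroup perm.
From Stdlib Require Import Reals Lra.
From Stdlib Require Import ClassicalEpsilon Classical FunctionalExtensionality.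
Local Open Scope R_scope.

Lemma Rplus_associative : associative Rplus. Proof. by move=> *; ring. Qed.
HB.instance Definition _ :=
  Monoid.isComLaw.Build R R0 Rplus Rplus_associative Rplus_comm Rplus_0_l.
HB.instance Definition _ := Monoid.isMulLaw.Build R R0 Rmult Rmult_0_l Rmult_0_r.
HB.instance Definition _ :=
  Monoid.isAddLaw.Build R Rmult Rplus Rmult_plus_distr_r Rmult_plus_distr_l.

(** * Real arithmetic and sequences *)

Lemma Rdiv_lt_iff a b c : 0 < b -> (a / b < c <-> a < c * b).
Proof.
move=> b_gt0; have ab : a / b * b = a by field; lra.
split=> lt_a; first by rewrite -ab; apply: Rmult_lt_compat_r.
by apply: (Rmult_lt_reg_r b) => //; rewrite ab.
Qed.

Lemma Rdiv_le_iff a b c : 0 < b -> (a / b <= c <-> a <= c * b).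
Proof.
move=> b_gt0; have ab : a / b * b = a by field; lra.
split=> le_a; first by rewrite -ab; apply: Rmult_le_compat_r => //; lra.
by apply: (Rmult_le_reg_r b) => //; rewrite ab.
Qed.

Lemma Rpower_gt0 x p : 0 < Rpower x p.
Proof. exact: exp_pos. Qed.

Lemma Rpower_m1 x : 0 < x -> Rpower x (-1) = / x.
Proof. by move=> x_gt0; rewrite Rpower_Ropp Rpower_1. Qed.

Lemma Rpower_2 x : 0 < x -> Rpower x 2 = x * x.
Proof.
move=> x_gt0; have -> : (2 : R) = 1 + 1 by ring.
by rewrite Rpower_plus Rpower_1.
Qed.

Lemma Rpower_m2 x : 0 < x -> Rpower x (-2) = / (x * x).
Proof. by move=> x_gt0; rewrite Rpower_Ropp Rpower_2. Qed.

Lemma Rpower_inv_base x p : 0 < x -> Rpower (/ x) p = Rpower x (- p).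
Proof. by move=> x_gt0; rewrite /Rpower ln_Rinv //; congr exp; ring. Qed.

Lemma Rpower_gt1 x p : 1 < x -> 0 < p -> 1 < Rpower x p.
Proof. by move=> x_gt1 p_gt0; rewrite -(Rpower_O x); [apply: Rpower_lt | lra]. Qed.

Lemma Rpower_gap a b r m : 0 < a -> 0 < b -> 0 < r -> 0 < m -> a < Rpower r m * b ->
  exists rho, (0 < rho < r) /\ a < Rpower rho m * b.
Proof.
move=> a_gt0 b_gt0 r_gt0 m_gt0 a_lt.
pose rho0 := Rpower (a / b) (/ m).
have rho0_gt0 : 0 < rho0 by apply: Rpower_gt0.
have rho0_m : Rpower rho0 m = a / b.
  by rewrite /rho0 Rpower_mult Rinv_l ?Rpower_1 //; [apply: Rdiv_lt_0_compat | lra].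
have rho0_lt : rho0 < r.
  apply: Rnot_le_lt => r_le; suff : Rpower r m * b <= a by lra.
  have -> : a = Rpower rho0 m * b by rewrite rho0_m; field; lra.
  by apply: Rmult_le_compat_r; [lra | apply: Rle_Rpower_l; lra].
exists ((rho0 + r) / 2); split; first lra.
have -> : a = Rpower rho0 m * b by rewrite rho0_m; field; lra.
by apply: Rmult_lt_compat_r => //; apply: Rlt_Rpower_l; lra.
Qed.

Lemma Un_cv_const c : Un_cv (fun _ => c) c.
Proof. by move=> eps eps_gt0; exists 0%nat => k _; rewrite /Rdist Rminus_diag Rabs_R0. Qed.

Lemma Un_cv_inv (u : nat -> R) l :
  (forall k, Rabs (u k - l) < / (INR k + 1)) -> Un_cv u l.
Proof.
move=> u_near eps eps_gt0; have [N [N_gt N_gt0]] := archimed_cor1 eps eps_gt0.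
exists N => k /le_INR k_ge; apply: Rlt_le_trans (u_near k) _.
apply: Rle_trans (Rlt_le _ _ N_gt); apply: Rinv_le_contravar; last lra.
by have := lt_INR _ _ N_gt0; rewrite /=; lra.
Qed.

(** * Finite sums and distances in R^n *)

Section Sums.
Context {n : nat}.
Implicit Types F G : 'I_n -> R.

Lemma rsum_add F G : rsum (fun i => F i + G i) = rsum F + rsum G.
Proof. exact: big_split. Qed.

Lemma rsum_scale F a : rsum (fun i => a * F i) = a * rsum F.
Proof. by rewrite /rsum big_distrr. Qed.

Lemma eq_rsum F G : (forall i, F i = G i) -> rsum F = rsum G.
Proof. by move=> FG; apply: eq_bigr => i _. Qed.

Lemma rsum0 : rsum (fun _ : 'I_n => 0) = 0.
Proof. exact: big1. Qed.

Lemma rsum_delta F j : rsum (fun k => (if k == j then 1 else 0) * F k) = F j.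
Proof.
rewrite /rsum (bigD1 j) //= eqxx big1; first by ring.
by move=> k /negbTE ->; ring.
Qed.

Lemma rsum_ge0 F : (forall i, 0 <= F i) -> 0 <= rsum F.
Proof. by move=> F_ge0; apply: big_ind => [|a b|i _]; [lra | lra | exact: F_ge0]. Qed.

Lemma rsum_term_le F j : (forall i, 0 <= F i) -> F j <= rsum F.
Proof.
move=> F_ge0; rewrite /rsum (bigD1 j) //=.
rewrite -{1}(Rplus_0_r (F j)); apply: Rplus_le_compat_l.
by apply: big_ind => [|a b|i _]; [lra | lra | exact: F_ge0].
Qed.

Lemma rsum_exchange (F : 'I_n -> 'I_n -> R) :
  rsum (fun i => rsum (F i)) = rsum (fun j => rsum (fun i => F i j)).
Proof. exact: exchange_big. Qed.

Lemma rsum_cv (F : nat -> 'I_n -> R) (L : 'I_n -> R) :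
  (forall i, Un_cv (F^~ i) (L i)) -> Un_cv (fun k => rsum (F k)) (rsum L).
Proof.
move=> FL; rewrite /rsum; elim: (index_enum _) => [|i s IH].
  rewrite big_nil; apply: (Un_cv_ext (fun _ => 0)); first by move=> k; rewrite big_nil.
  exact: Un_cv_const.
rewrite big_cons; apply: (Un_cv_ext (fun k => F k i + \big[Rplus/0]_(j <- s) F k j)).
  by move=> k; rewrite big_cons.
exact: CV_plus.
Qed.

End Sums.

Section Distance.
Context {n : nat}.
Implicit Types x y z w : pt n.

Definition sqdist z y : R := dot (fun k => z k - y k) (fun k => z k - y k).

Lemma sqdist_ge0 z y : 0 <= sqdist z y.
Proof. by apply: rsum_ge0 => i; apply: Rle_0_sqr. Qed.

Lemma pdist_ge0 z y : 0 <= pdist z y.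
Proof. exact: sqrt_pos. Qed.

Lemma pdist_sq z y : pdist z y * pdist z y = sqdist z y.
Proof. exact/sqrt_sqrt/sqdist_ge0. Qed.

Lemma sqdist_refl x : sqdist x x = 0.
Proof. by rewrite -(@rsum0 n); apply: eq_rsum => i; ring. Qed.

Lemma pdist_refl x : pdist x x = 0.
Proof. by rewrite /pdist /norm -/(sqdist x x) sqdist_refl sqrt_0. Qed.

Lemma sqdist_le z y r : 0 <= r -> pdist z y <= r -> sqdist z y <= r * r.
Proof. by move=> r_ge0 zy_le; rewrite -pdist_sq; have := pdist_ge0 z y; nra. Qed.

Lemma coord_le_pdist z y i : Rabs (z i - y i) <= pdist z y.
Proof.
rewrite -sqrt_Rsqr_abs; apply: sqrt_le_1_alt; rewrite /Rsqr.
by apply: (rsum_term_le (fun k => (z k - y k) * (z k - y k))) => k; apply: Rle_0_sqr.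
Qed.

Lemma sqdist_line z y j t :
  sqdist (ptadd z (ptscal t (e_ j))) y = sqdist z y + 2 * (z j - y j) * t + t * t.
Proof.
rewrite /sqdist /dot /ptadd /ptscal /e_.
rewrite (eq_rsum _ (fun k => (z k - y k) * (z k - y k) +
  (if k == j then 1 else 0) * (2 * (z k - y k) * t + t * t))).
  by rewrite rsum_add rsum_delta; ring.
by move=> k; case: (k == j); ring.
Qed.

Lemma ptadd_scal0 z v : ptadd z (ptscal 0 v) = z.
Proof. by apply: functional_extensionality => i; rewrite /ptadd /ptscal; ring. Qed.

Lemma pdist_line w j t : pdist (ptadd w (ptscal t (e_ j))) w = Rabs t.
Proof.
rewrite /pdist /norm -/(sqdist _ w) sqdist_line sqdist_refl -sqrt_Rsqr_abs /Rsqr.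
by congr sqrt; ring.
Qed.

Definition cv_pt (z : nat -> pt n) (l : pt n) := forall i, Un_cv (fun k => z k i) (l i).

Lemma sqdist_cv (z : nat -> pt n) l y :
  cv_pt z l -> Un_cv (fun k => sqdist (z k) y) (sqdist l y).
Proof.
move=> zl; apply: (rsum_cv (fun k i => (z k i - y i) * (z k i - y i))) => i.
by apply: CV_mult; apply: CV_minus => //; apply: Un_cv_const.
Qed.

Lemma pdist_cv (z : nat -> pt n) l y :
  cv_pt z l -> Un_cv (fun k => pdist (z k) y) (pdist l y).
Proof.
move=> zl; apply: (continuity_seq sqrt (fun k => sqdist (z k) y)).
  exact/continuity_pt_sqrt/sqdist_ge0.
exact: sqdist_cv.
Qed.

Lemma cv_pt_pdist (z : nat -> pt n) x :
  (forall k, pdist (z k) x < / (INR k + 1)) -> cv_pt z x.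
Proof.
by move=> zx i; apply: Un_cv_inv => k; apply: Rle_lt_trans (coord_le_pdist _ _ i) (zx k).
Qed.

Lemma seq_continuous_at (U : pt n -> Prop) (g : pt n -> R) x :
  (forall z : nat -> pt n, (forall k, U (z k)) -> cv_pt z x ->
     Un_cv (fun k => g (z k)) (g x)) ->
  forall eps, 0 < eps -> exists d, 0 < d /\
    forall y, U y -> pdist y x < d -> Rabs (g y - g x) < eps.
Proof.
move=> g_seq eps eps_gt0; apply: NNPP => no_delta.
have bad k : exists y, U y /\ pdist y x < / (INR k + 1) /\ eps <= Rabs (g y - g x).
  apply: NNPP => no_y; apply: no_delta; exists (/ (INR k + 1)); split.
    by apply: Rinv_0_lt_compat; have := pos_INR k; lra.
  move=> y Uy yx; apply: Rnot_le_lt => gy; apply: no_y; by exists y.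
have [z zP] := choice _ bad.
have [N /(_ N (Nat.le_refl N))] :=
  g_seq z (fun k => proj1 (zP k)) (cv_pt_pdist z x (fun k => proj1 (proj2 (zP k)))) eps eps_gt0.
by have [_ [_ ?]] := zP N; rewrite /Rdist; lra.
Qed.

Lemma pdist_nbhd x z r : pdist z x < r ->
  exists d, 0 < d /\ forall y, pdist y z < d -> pdist y x < r.
Proof.
move=> zx; have gap : 0 < r - pdist z x by lra.
have [d [d_gt0 dP]] := @seq_continuous_at (fun _ => True) (fun y => pdist y x) z
  (fun s _ => @pdist_cv s z x) _ gap.
exists d; split => // y yz; have := dP y I yz; split_Rabs; lra.
Qed.

End Distance.

Definition cont_at {n} (h : pt n -> R) (w : pt n) : Prop :=
  forall eps, 0 < eps -> exists d, 0 < d /\ forall y, pdist y w < d -> Rabs (h y - h w) < eps.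

(** * Sequential compactness and upper semicontinuous maxima *)

Definition increasing (phi : nat -> nat) := forall j, (phi j < phi j.+1)%nat.

Lemma increasing_ge {phi} : increasing phi -> forall j, (j <= phi j)%nat.
Proof. by move=> phi_incr; elim=> // j IH; apply: leq_ltn_trans IH (phi_incr j). Qed.

Lemma increasing_comp {phi psi} : increasing phi -> increasing psi -> increasing (phi \o psi).
Proof. by move=> phi_incr psi_incr j; apply: (homo_ltn ltn_trans phi_incr). Qed.

Lemma Un_cv_subseq {a : nat -> R} {l phi} :
  increasing phi -> Un_cv a l -> Un_cv (a \o phi) l.
Proof.
move=> phi_incr al eps eps_gt0; have [N aN] := al eps eps_gt0; exists N => j /leP jN.
by apply/aN/leP; apply: leq_trans jN (increasing_ge phi_incr j).
Qed.

Lemma R_bounded_subseq_cv {a : nat -> R} {B} : (forall k, Rabs (a k) <= B) ->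
  exists2 phi, increasing phi & exists l, Un_cv (a \o phi) l.
Proof.
move=> a_le; have a_in k : - B <= a k <= B by have := a_le k; split_Rabs; lra.
have [l l_adh] := Bolzano_Weierstrass a _ (compact_P3 (- B) B) a_in.
have near_l (Nk : nat * nat) :
    exists p, (Nk.1 <= p)%nat /\ Rabs (a p - l) < / (INR Nk.2 + 1).
  have r_gt0 : 0 < / (INR Nk.2 + 1) by apply: Rinv_0_lt_compat; have := pos_INR Nk.2; lra.
  have [p [/leP Np pP]] := l_adh (disc l (mkposreal _ r_gt0)) Nk.1
    (ex_intro _ (mkposreal _ r_gt0) (fun y y_in => y_in)).
  by exists p.
have [pick pickP] := choice _ near_l.
pose fix phi j := if j is j'.+1 then pick ((phi j').+1, j) else pick (0%nat, 0%nat).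
exists phi; first by move=> j; case: (pickP ((phi j).+1, j.+1)).
exists l; apply: Un_cv_inv => -[|j] /=; first exact: (pickP (0%nat, 0%nat)).2.
exact: (pickP (_, j.+1)).2.
Qed.

Lemma pt_bounded_subseq_cv {n} {z : nat -> pt n} {B : pt n} :
  (forall k i, Rabs (z k i) <= B i) ->
  exists2 phi, increasing phi & exists l, cv_pt (z \o phi) l.
Proof.
move=> z_le.
suff /(_ n (leqnn n)) [phi phi_incr [l zl]] : forall k, (k <= n)%nat ->
    exists2 phi, increasing phi & exists l : pt n,
      forall i : 'I_n, (i < k)%nat -> Un_cv (fun j => z (phi j) i) (l i).
  by exists phi => //; exists l => i; apply: zl.
elim=> [|k IH] kn.
  by exists (fun j : nat => j) => [j|]; last exists (fun _ => 0).
have [phi phi_incr [l zl]] := IH (ltnW kn).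
pose i0 : 'I_n := Ordinal kn.
have [psi psi_incr [l0 zl0]] := R_bounded_subseq_cv (fun j => z_le (phi j) i0).
exists (phi \o psi); first exact: increasing_comp.
exists (fun i => if i == i0 then l0 else l i) => i ik.
case: (eqVneq i i0) => [-> // | i_ne].
apply: (Un_cv_subseq psi_incr (zl i _)).
rewrite ltn_neqAle -ltnS ik andbT; apply: contra_neq i_ne => ik_eq.
exact: val_inj.
Qed.

Definition cball {n} (x : pt n) (r : R) : pt n -> Prop := fun y => pdist y x <= r.

Lemma cball_cluster {n} (x : pt n) rho (w : nat -> pt n) : (forall k, cball x rho (w k)) ->
  exists2 l, cball x rho l &
    forall d N, 0 < d -> exists k, (N <= k)%nat /\ pdist (w k) l < d.
Proof.
move=> w_in.
have w_le k i : Rabs (w k i) <= rho + Rabs (x i).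
  have := coord_le_pdist (w k) x i; have := w_in k; rewrite /cball.
  have := Rabs_triang (w k i - x i) (x i); have -> : w k i - x i + x i = w k i by ring.
  lra.
have [phi phi_incr [l wl]] := pt_bounded_subseq_cv w_le.
exists l.
  by rewrite /cball; apply: (Rle_cv_lim _ (pdist_cv _ _ x wl) (Un_cv_const rho)) => j; apply: w_in.
move=> d N d_gt0.
have [J wJ] := pdist_cv _ _ l wl d d_gt0.
exists (phi (maxn N J)); split.
  by apply: leq_trans (increasing_ge phi_incr _); apply: leq_maxl.
have := wJ (maxn N J) (leP (leq_maxr N J)); rewrite /Rdist pdist_refl /=.
by split_Rabs; lra.
Qed.

Definition usc_in {n} (K : pt n -> Prop) (g : pt n -> R) (w : pt n) : Prop :=
  forall eps, 0 < eps -> exists d, 0 < d /\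
    forall y, K y -> pdist y w < d -> g y < g w + eps.

Lemma usc_in_sub {n} (K K' : pt n -> Prop) g w :
  (forall y, K y -> K' y) -> usc_in K' g w -> usc_in K g w.
Proof.
move=> KK' g_usc eps eps_gt0; have [d [d_gt0 dP]] := g_usc eps eps_gt0.
by exists d; split => // y Ky; apply/dP/KK'.
Qed.

Section UscMax.
Context {n : nat} (g : pt n -> R) (x : pt n) (rho : R).
Hypothesis g_usc : forall w, cball x rho w -> usc_in (cball x rho) g w.

Lemma usc_cball_frequently (a : nat -> R) :
  (forall k, exists w, cball x rho w /\ a k < g w) ->
  exists2 l, cball x rho l & forall eps N, 0 < eps -> exists k, (N <= k)%nat /\ a k < g l + eps.
Proof.
move=> a_lt; have [w wP] := choice _ a_lt.
have [l l_in l_cluster] := cball_cluster x rho w (fun k => proj1 (wP k)).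
exists l => // eps N eps_gt0.
have [d [d_gt0 dP]] := g_usc l l_in eps eps_gt0.
have [k [Nk wk]] := l_cluster d N d_gt0.
by exists k; split => //; apply: Rlt_trans (proj2 (wP k)) (dP _ (proj1 (wP k)) wk).
Qed.

Lemma usc_cball_max : 0 <= rho ->
  exists2 z, cball x rho z & forall w, cball x rho w -> g w <= g z.
Proof.
move=> rho_ge0; have x_in : cball x rho x by rewrite /cball pdist_refl.
have [[B gB] | g_unbnd] := classic (exists B, forall w, cball x rho w -> g w <= B).
- pose E y := exists2 w, cball x rho w & y = g w.
  have E_bnd : bound E by exists B => _ [w w_in ->]; apply: gB.
  have [S [S_ub S_lub]] := completeness E E_bnd (ex_intro _ (g x) (ex_intro2 _ _ x x_in erefl)).
  have near_S k : exists w, cball x rho w /\ S - / (INR k + 1) < g w.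
    apply: NNPP => no_w.
    have k_pos : 0 < / (INR k + 1) by apply: Rinv_0_lt_compat; have := pos_INR k; lra.
    suff : S <= S - / (INR k + 1) by lra.
    apply: S_lub => _ [w w_in ->]; apply: Rnot_lt_le => gw; apply: no_w; by exists w.
  have [l l_in l_freq] := usc_cball_frequently _ near_S.
  exists l => // w w_in; suff : S <= g l by have := S_ub _ (ex_intro2 _ _ w w_in erefl); lra.
  apply: Rnot_lt_le => gl_lt; have gap : 0 < (S - g l) / 2 by lra.
  have [N [N_lt N_gt0]] := archimed_cor1 _ gap.
  have [k [/leP/le_INR Nk lk]] := l_freq _ N gap.
  suff : / (INR k + 1) <= / INR N by lra.
  apply: Rinv_le_contravar; [exact: lt_0_INR N_gt0 | lra].
- have above k : exists w, cball x rho w /\ INR k < g w.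
    apply: NNPP => no_w; apply: g_unbnd; exists (INR k) => w w_in.
    apply: Rnot_lt_le => gw; apply: no_w; by exists w.
  have [l l_in l_freq] := usc_cball_frequently _ above.
  have [N N_gt] := INR_unbounded (g l + 1).
  have [k [/leP/le_INR Nk lk]] := l_freq 1 N Rlt_0_1.
  lra.
Qed.

End UscMax.

Lemma usc_in_div {n} (K : pt n -> Prop) (v h : pt n -> R) (w : pt n) :
  0 < v w -> 0 < h w -> usc_in K v w -> cont_at h w ->
  usc_in K (fun y => v y / h y) w.
Proof.
move=> vw_gt0 hw_gt0 v_usc h_cont eps eps_gt0.
set q := v w / h w; have q_gt0 : 0 < q by apply: Rdiv_lt_0_compat.
(* chosen so that [v y < v w + e1] and [h y > h w - e2] give [v y < (q + eps) h y] *)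
pose e1 := eps * h w / 2; pose e2 := eps * h w / (2 * (q + eps)).
have e1_gt0 : 0 < e1 by rewrite /e1; nra.
have e2_gt0 : 0 < e2 by apply: Rdiv_lt_0_compat; nra.
have e2_lt : e2 < h w / 2.
  apply: (Rmult_lt_reg_r (2 * (q + eps))); first lra.
  by rewrite /e2; field_simplify; [nra | lra].
have vw_eq : v w = q * h w by rewrite /q; field; lra.
have key : (q + eps) * (h w - e2) = v w + e1 by rewrite vw_eq /e1 /e2; field; lra.
have [d1 [d1_gt0 vP]] := v_usc e1 e1_gt0; have [d2 [d2_gt0 hP]] := h_cont e2 e2_gt0.
exists (Rmin d1 d2); split; first exact: Rmin_pos.
move=> y Ky /Rmin_Rgt [yw1 yw2]; have := vP y Ky yw1; have := hP y yw2.
move=> /Rabs_def2 [_ hy_gt] vy_lt; rewrite Rdiv_lt_iff; last lra.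
by nra.
Qed.

Lemma usc_ratio_max_interior {n} (v h : pt n -> R) (x : pt n) rho : 0 < rho ->
  (forall w, cball x rho w -> 0 < v w /\ 0 < h w) ->
  (forall w, cball x rho w -> usc_in (cball x rho) v w) ->
  (forall w, cont_at h w) ->
  (forall w, pdist w x = rho -> v w / h w < v x / h x) ->
  exists z, pdist z x < rho /\ forall w, cball x rho w -> v w / h w <= v z / h z.
Proof.
move=> rho_gt0 vh_gt0 v_usc h_cont sphere_lt.
have ratio_usc w : cball x rho w -> usc_in (cball x rho) (fun y => v y / h y) w.
  by move=> w_in; have [? ?] := vh_gt0 w w_in; apply: usc_in_div => //; apply: v_usc.
have [z z_in z_max] := usc_cball_max _ x rho ratio_usc (Rlt_le _ _ rho_gt0).
exists z; split => //; case: (Rle_lt_or_eq_dec _ _ z_in) => // z_sphere.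
have := z_max x; rewrite /cball pdist_refl => /(_ (Rlt_le _ _ rho_gt0)).
by have := sphere_lt z z_sphere; lra.
Qed.

Lemma ratio_max_touches {n} (v h : pt n -> R) (x z : pt n) rho : pdist z x < rho ->
  (forall w, cball x rho w -> 0 < h w) ->
  (forall w, cball x rho w -> v w / h w <= v z / h z) ->
  exists2 d, 0 < d & forall y, pdist y z < d -> v y <= v z / h z * h y.
Proof.
move=> z_in h_gt0 z_max; have [d [d_gt0 dP]] := pdist_nbhd x z rho z_in.
exists d => // y yz; have y_in : cball x rho y by have := dP y yz; rewrite /cball; lra.
by rewrite -Rdiv_le_iff; [apply: z_max | apply: h_gt0].
Qed.

(** * Gluing and C^2 extension of one-variable functions *)

Lemma derivable_pt_lim_eq (f g : R -> R) x l l' :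
  derivable_pt_lim f x l -> (forall t, f t = g t) -> l = l' -> derivable_pt_lim g x l'.
Proof. by move=> df fg <-; apply: derivable_pt_lim_ext df. Qed.

Lemma derivable_pt_lim_quad A B C T s :
  derivable_pt_lim (fun t => A + B * (t - T) + C * ((t - T) * (t - T))) s
    (B + 2 * C * (s - T)).
Proof.
have d_lin := derivable_pt_lim_minus _ _ s _ _ (derivable_pt_lim_id s) (derivable_pt_lim_const T s).
have d_sq := derivable_pt_lim_mult _ _ s _ _ d_lin d_lin.
have := derivable_pt_lim_plus _ _ s _ _
  (derivable_pt_lim_plus _ _ s _ _ (derivable_pt_lim_const A s) (derivable_pt_lim_scal _ B s _ d_lin))
  (derivable_pt_lim_scal _ C s _ d_sq).
move/derivable_pt_lim_eq; apply=> [t|];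
  by rewrite /plus_fct /minus_fct /mult_fct /mult_real_fct /fct_cte /id; ring.
Qed.

Lemma derivable_pt_lim_Rpower_sub c p t : t < c ->
  derivable_pt_lim (fun s => Rpower (c - s) p) t (- (p * Rpower (c - t) (p - 1))).
Proof.
move=> t_lt.
have d_in : derivable_pt_lim (fun s => c - s) t (-1).
  apply: (derivable_pt_lim_eq _ _ _ _ _ (derivable_pt_lim_minus _ _ t _ _
    (derivable_pt_lim_const c t) (derivable_pt_lim_id t))) => //; ring.
have := derivable_pt_lim_comp _ _ t _ _ d_in (derivable_pt_lim_power (c - t) p ltac:(lra)).
by move/derivable_pt_lim_eq; apply=> //; ring.
Qed.

Definition glue (a : R) (f g : R -> R) (s : R) : R := if Rle_dec s a then f s else g s.

Lemma glue_left a f g s : s <= a -> glue a f g s = f s.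
Proof. by rewrite /glue; case: Rle_dec. Qed.

Lemma glue_right a f g s : a < s -> glue a f g s = g s.
Proof. by move=> lt_as; rewrite /glue; case: Rle_dec => // le_sa; exfalso; lra. Qed.

Lemma glue_derivable a (f g f' g' : R -> R) t :
  (forall s, s <= a -> derivable_pt_lim f s (f' s)) ->
  (forall s, a <= s -> derivable_pt_lim g s (g' s)) ->
  f a = g a -> f' a = g' a ->
  derivable_pt_lim (glue a f g) t (glue a f' g' t).
Proof.
move=> df dg fg_a fg'_a; case: (Rtotal_order t a) => [t_lt | [-> | t_gt]].
- rewrite glue_left; last lra.
  apply: (derivable_pt_lim_locally_ext f _ t (t - 1) a); first lra.
    by move=> s s_in; rewrite glue_left //; lra.
  exact/df/Rlt_le.
- rewrite glue_left; last lra.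
  move=> eps eps_gt0; have [d1 d1P] := df a (Rle_refl a) eps eps_gt0.
  have [d2 d2P] := dg a (Rle_refl a) eps eps_gt0.
  have d_gt0 : 0 < Rmin d1 d2 by apply: Rmin_pos; apply: cond_pos.
  exists (mkposreal _ d_gt0) => h h_ne /= /Rmin_Rgt [h_d1 h_d2].
  rewrite (glue_left a f g a); last lra.
  case: (Rle_dec (a + h) a) => [ah_le | ah_gt].
    by rewrite glue_left //; apply: d1P.
  by rewrite glue_right ?fg_a ?fg'_a; [apply: d2P | lra].
- rewrite glue_right //.
  apply: (derivable_pt_lim_locally_ext g _ t a (t + 1)); first lra.
    by move=> s s_in; rewrite glue_right //; lra.
  exact/dg/Rlt_le.
Qed.

Lemma glue_continuous a (f g : R -> R) t :
  (forall s, s <= a -> continuity_pt f s) -> (forall s, a <= s -> continuity_pt g s) ->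
  f a = g a -> continuity_pt (glue a f g) t.
Proof.
move=> cf cg fg_a; case: (Rtotal_order t a) => [t_lt | [-> | t_gt]].
- apply: (continuity_pt_locally_ext f _ (a - t)); first lra.
    by move=> s; rewrite /Rdist => s_near; rewrite glue_left //; split_Rabs; lra.
  exact/cf/Rlt_le.
- move=> eps eps_gt0; have [d1 [d1_gt0 d1P]] := cf a (Rle_refl a) eps eps_gt0.
  have [d2 [d2_gt0 d2P]] := cg a (Rle_refl a) eps eps_gt0.
  exists (Rmin d1 d2); split; first exact: Rmin_pos.
  move=> s [s_ne /Rmin_Rgt [s_d1 s_d2]]; rewrite (glue_left a f g a); last lra.
  case: (Rle_dec s a) => [s_le | s_gt].
    by rewrite glue_left //; apply: d1P.
  by rewrite glue_right ?fg_a; [apply: d2P | lra].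
- apply: (continuity_pt_locally_ext g _ (t - a)); first lra.
    by move=> s; rewrite /Rdist => s_near; rewrite glue_right //; split_Rabs; lra.
  exact/cg/Rlt_le.
Qed.

Section C2Extension.
Variables (T : R) (g g1 g2 : R -> R).
Hypotheses (dg : forall s, s <= T -> derivable_pt_lim g s (g1 s))
  (dg1 : forall s, s <= T -> derivable_pt_lim g1 s (g2 s))
  (cg2 : forall s, s <= T -> continuity_pt g2 s).

Definition taylor_ext := glue T g (fun t => g T + g1 T * (t - T) + g2 T / 2 * ((t - T) * (t - T))).
Definition taylor_ext1 := glue T g1 (fun t => g1 T + g2 T * (t - T)).
Definition taylor_ext2 := glue T g2 (fun _ => g2 T).

Lemma taylor_ext_derivable t : derivable_pt_lim taylor_ext t (taylor_ext1 t).
Proof.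
apply: glue_derivable => //; try ring.
move=> s _; apply: derivable_pt_lim_eq (derivable_pt_lim_quad _ _ _ T s) _ _ => //; field.
Qed.

Lemma taylor_ext1_derivable t : derivable_pt_lim taylor_ext1 t (taylor_ext2 t).
Proof.
apply: glue_derivable => //; try ring.
move=> s _; apply: derivable_pt_lim_eq (derivable_pt_lim_quad (g1 T) (g2 T) 0 T s) _ _ => [u|];
  ring.
Qed.

Lemma taylor_ext2_continuous t : continuity_pt taylor_ext2 t.
Proof. by apply: glue_continuous => // s _; apply: continuity_pt_const. Qed.

End C2Extension.

(** * The canonical profile and radial functions *)

Section Profile.
Variables (al Rr m : R).

Definition prof t := al * Rpower Rr m * Rpower (Rr * Rr - t) (- m).
Definition prof1 t := m * al * Rpower Rr m * Rpower (Rr * Rr - t) (- m - 1).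
Definition prof2 t := m * (m + 1) * al * Rpower Rr m * Rpower (Rr * Rr - t) (- m - 2).

Lemma prof_derivable t : t < Rr * Rr -> derivable_pt_lim prof t (prof1 t).
Proof.
move=> t_lt; have := derivable_pt_lim_scal _ (al * Rpower Rr m) _ _
  (derivable_pt_lim_Rpower_sub _ (- m) _ t_lt).
by move/derivable_pt_lim_eq; apply=> [s|]; rewrite /mult_real_fct /prof /prof1; ring.
Qed.

Lemma prof1_derivable t : t < Rr * Rr -> derivable_pt_lim prof1 t (prof2 t).
Proof.
move=> t_lt; have := derivable_pt_lim_scal _ (m * al * Rpower Rr m) _ _
  (derivable_pt_lim_Rpower_sub _ (- m - 1) _ t_lt).
have -> : - m - 1 - 1 = - m - 2 by ring.
by move/derivable_pt_lim_eq; apply=> [s|]; rewrite /mult_real_fct /prof1 /prof2; ring.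
Qed.

Lemma prof2_continuous t : t < Rr * Rr -> continuity_pt prof2 t.
Proof.
move=> t_lt; apply: derivable_continuous_pt; eexists.
have := derivable_pt_lim_scal _ (m * (m + 1) * al * Rpower Rr m) _ _
  (derivable_pt_lim_Rpower_sub _ (- m - 2) _ t_lt).
move/derivable_pt_lim_eq; apply=> [s|]; last reflexivity.
by rewrite /mult_real_fct /prof2; ring.
Qed.

End Profile.

Lemma prof_gt0 al Rr m t : 0 < al -> 0 < prof al Rr m t.
Proof. by move=> al_gt0; rewrite /prof; repeat apply: Rmult_lt_0_compat => //; apply: Rpower_gt0. Qed.

Lemma prof_at0 al Rr m : 0 < Rr -> prof al Rr m 0 = al / Rpower Rr m.
Proof.
move=> Rr_gt0; rewrite /prof Rminus_0_r -Rpower_mult_distr // Rpower_Ropp; field.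
exact/Rgt_not_eq/Rpower_gt0.
Qed.

Lemma prof1_eq al Rr m t : t < Rr * Rr ->
  prof1 al Rr m t = m * prof al Rr m t / (Rr * Rr - t).
Proof.
move=> t_lt; rewrite /prof1 /prof.
have -> : - m - 1 = - m + -1 by ring.
by rewrite Rpower_plus Rpower_m1; [field | ]; lra.
Qed.

Lemma prof2_eq al Rr m t : t < Rr * Rr ->
  prof2 al Rr m t = m * (m + 1) * prof al Rr m t / ((Rr * Rr - t) * (Rr * Rr - t)).
Proof.
move=> t_lt; rewrite /prof2 /prof.
have -> : - m - 2 = - m + -2 by ring.
by rewrite Rpower_plus Rpower_m2; [field | ]; lra.
Qed.

Lemma Rpower_scaled_prof c al Rr m t : 0 < c -> 0 < al -> 0 < Rr -> 0 < m -> t < Rr * Rr ->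
  Rpower (c * prof al Rr m t) (- (2 / m)) =
    Rpower (c * al) (- (2 / m)) * ((Rr * Rr - t) * (Rr * Rr - t)) / (Rr * Rr).
Proof.
move=> c_gt0 al_gt0 Rr_gt0 m_gt0 t_lt; have w_gt0 : 0 < Rr * Rr - t by lra.
have -> : c * prof al Rr m t = c * al * Rpower Rr m * Rpower (Rr * Rr - t) (- m).
  by rewrite /prof; ring.
have A_gt0 := Rpower_gt0 Rr m; have P_gt0 := Rpower_gt0 (Rr * Rr - t) (- m).
rewrite -!Rpower_mult_distr //; try by apply: Rmult_lt_0_compat => //; nra.
rewrite !Rpower_mult (_ : m * - (2 / m) = -2); last by field; lra.
rewrite (_ : - m * - (2 / m) = 2); last by field; lra.
by rewrite Rpower_m2 // Rpower_2 //; field; lra.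
Qed.

Lemma prof_unbounded al Rr m K : 0 < al -> 0 < Rr -> 0 < m ->
  exists R1, (0 < R1 < Rr) /\ K < prof al Rr m (R1 * R1).
Proof.
move=> al_gt0 Rr_gt0 m_gt0.
pose B := Rmax K 1 / (al * Rpower Rr m).
have B_gt0 : 0 < B.
  apply: Rdiv_lt_0_compat; first by have := Rmax_r K 1; lra.
  by apply: Rmult_lt_0_compat => //; apply: Rpower_gt0.
pose w0 := Rpower (/ B) (/ m).
have w0_gt0 : 0 < w0 by apply: Rpower_gt0.
have w0_m : Rpower w0 m = / B.
  by rewrite /w0 Rpower_mult Rinv_l ?Rpower_1 //; [apply: Rinv_0_lt_compat | lra].
pose w := Rmin (Rr * Rr / 2) (w0 / 2).
have w_gt0 : 0 < w by apply: Rmin_pos; nra.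
have w_le : w <= Rr * Rr / 2 by apply: Rmin_l.
have w_lt : w < w0 by have := Rmin_r (Rr * Rr / 2) (w0 / 2); rewrite -/w; lra.
have B_lt : B < Rpower w (- m).
  rewrite Rpower_Ropp -(Rinv_inv B); apply: Rinv_lt_contravar.
    by apply: Rmult_lt_0_compat; [apply: Rpower_gt0 | apply: Rinv_0_lt_compat].
  by rewrite -w0_m; apply: Rlt_Rpower_l; lra.
exists (sqrt (Rr * Rr - w)); rewrite sqrt_sqrt; last lra.
split.
  split; first by apply: sqrt_lt_R0; lra.
  rewrite -{3}(sqrt_square Rr); last lra.
  by apply: sqrt_lt_1_alt; nra.
rewrite /prof (_ : Rr * Rr - (Rr * Rr - w) = w); last by ring.
apply: Rle_lt_trans (Rmax_l K 1) _.
have -> : Rmax K 1 = al * Rpower Rr m * B by rewrite /B; field; split; [apply: Rgt_not_eq; apply: Rpower_gt0 | lra].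
by apply: Rmult_lt_compat_l => //; apply: Rmult_lt_0_compat => //; apply: Rpower_gt0.
Qed.

Section Radial.
Context {n : nat}.
Variables (H H1 H2 : R -> R) (c : R) (y : pt n).

Definition radial (z : pt n) := c * H (sqdist z y).
Definition radial_grad (i : 'I_n) (z : pt n) := c * H1 (sqdist z y) * (2 * (z i - y i)).
Definition radial_hess (i j : 'I_n) (z : pt n) :=
  c * (H2 (sqdist z y) * (2 * (z j - y j)) * (2 * (z i - y i)) +
       H1 (sqdist z y) * (2 * (if i == j then 1 else 0))).

Lemma derivable_along_line (K : R -> R) z j l :
  derivable_pt_lim K (sqdist z y) l ->
  derivable_pt_lim (fun t => K (sqdist (ptadd z (ptscal t (e_ j))) y)) 0
    (l * (2 * (z j - y j))).
Proof.
have d_in : derivable_pt_lim (fun t => sqdist (ptadd z (ptscal t (e_ j))) y) 0 (2 * (z j - y j)).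
  apply: derivable_pt_lim_eq (derivable_pt_lim_quad (sqdist z y) (2 * (z j - y j)) 1 0 0) _ _
    => [t|]; rewrite ?sqdist_line; ring.
by rewrite -{1}(ptadd_scal0 z (e_ j)) => dK; apply: derivable_pt_lim_comp _ K 0 _ _ d_in dK.
Qed.

Lemma radial_partial i z : derivable_pt_lim H (sqdist z y) (H1 (sqdist z y)) ->
  partial_is radial i z (radial_grad i z).
Proof.
move=> dH; have := derivable_pt_lim_scal _ c _ _ (derivable_along_line H z i _ dH).
by move/derivable_pt_lim_eq; apply=> [t|]; rewrite /mult_real_fct /radial /radial_grad; ring.
Qed.

Lemma radial_grad_partial i j z : derivable_pt_lim H1 (sqdist z y) (H2 (sqdist z y)) ->
  partial_is (radial_grad i) j z (radial_hess i j z).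
Proof.
move=> dH1; have d_coord : derivable_pt_lim (fun t => 2 * (z i + t * e_ j i - y i)) 0
    (2 * (if i == j then 1 else 0)).
  apply: derivable_pt_lim_eq (derivable_pt_lim_quad (2 * (z i - y i)) (2 * e_ j i) 0 0 0) _ _
    => [t|]; rewrite /e_; ring.
have := derivable_pt_lim_mult _ _ _ _ _
  (derivable_pt_lim_scal _ c _ _ (derivable_along_line H1 z j _ dH1)) d_coord.
move/derivable_pt_lim_eq; apply=> [t|].
  by rewrite /mult_fct /mult_real_fct /radial_grad /ptadd /ptscal; ring.
by rewrite /mult_fct /mult_real_fct /radial_hess Rmult_0_l Rplus_0_r ptadd_scal0; ring.
Qed.

Lemma radial_C2 (U : pt n -> Prop) :
  (forall t, derivable_pt_lim H t (H1 t)) -> (forall t, derivable_pt_lim H1 t (H2 t)) ->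
  (forall t, continuity_pt H2 t) -> C2_on U radial radial_grad radial_hess.
Proof.
move=> dH dH1 cH2.
have cH t : continuity_pt H t by apply: derivable_continuous_pt; exists (H1 t); apply: dH.
have cH1 t : continuity_pt H1 t by apply: derivable_continuous_pt; exists (H2 t); apply: dH1.
have cv_K K s z : (forall t, continuity_pt K t) -> cv_pt s z ->
    Un_cv (fun k => K (sqdist (s k) y)) (K (sqdist z y)).
  by move=> cK sz; apply: continuity_seq; [apply: cK | apply: sqdist_cv].
have cv_coord i s z : cv_pt s z -> Un_cv (fun k => 2 * (s k i - y i)) (2 * (z i - y i)).
  by move=> sz; apply: CV_mult; [apply: Un_cv_const | apply: CV_minus; [apply: sz | apply: Un_cv_const]].
split; [|split; [|split; [|split]]].
- move=> z _; apply: seq_continuous_at => s _ sz; rewrite /radial.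
  by apply: CV_mult; [apply: Un_cv_const | apply: cv_K].
- by move=> i z _; apply: radial_partial.
- by move=> i j z _; apply: radial_grad_partial.
- move=> i z _; apply: seq_continuous_at => s _ sz; rewrite /radial_grad.
  by apply: CV_mult; [apply: CV_mult; [apply: Un_cv_const | apply: cv_K] | apply: cv_coord].
- move=> i j z _; apply: seq_continuous_at => s _ sz; rewrite /radial_hess.
  apply: CV_mult; first exact: Un_cv_const.
  apply: CV_plus; apply: CV_mult.
  + by apply: CV_mult; [apply: cv_K | apply: cv_coord].
  + exact: cv_coord.
  + exact: cv_K.
  + exact: Un_cv_const.
Qed.

End Radial.

(* The canonical profile blows up at [t = Rr^2], while test functions must be C^2 on the
   whole domain: beyond [T] it is continued by its second-order Taylor polynomial. *)
Section ProfileExtension.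
Variables (al Rr m T : R).
Hypothesis T_lt : T < Rr * Rr.

Definition prof_ext := taylor_ext T (prof al Rr m) (prof1 al Rr m) (prof2 al Rr m).
Definition prof_ext1 := taylor_ext1 T (prof1 al Rr m) (prof2 al Rr m).
Definition prof_ext2 := taylor_ext2 T (prof2 al Rr m).

Lemma radial_prof_ext_C2 {n} (U : pt n -> Prop) c y :
  C2_on U (radial prof_ext c y) (radial_grad prof_ext1 c y) (radial_hess prof_ext1 prof_ext2 c y).
Proof.
apply: radial_C2 => t.
- by apply: taylor_ext_derivable => s s_le; apply: prof_derivable; lra.
- by apply: taylor_ext1_derivable => s s_le; apply: prof1_derivable; lra.
- by apply: taylor_ext2_continuous => s s_le; apply: prof2_continuous; lra.
Qed.

Lemma radial_prof_ext_cont_at {n} (x w : pt n) : cont_at (fun y => prof_ext (sqdist y x)) w.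
Proof.
have cv_h s : (forall k : nat, True) -> cv_pt s w ->
    Un_cv (fun k => prof_ext (sqdist (s k) x)) (prof_ext (sqdist w x)).
  move=> _ sw; apply: continuity_seq; last exact: sqdist_cv.
  apply: derivable_continuous_pt; exists (prof_ext1 (sqdist w x)).
  by apply: taylor_ext_derivable => s' s_le; apply: prof_derivable; lra.
move=> eps eps_gt0; have [d [d_gt0 dP]] := seq_continuous_at (fun _ => True)
  (fun y => prof_ext (sqdist y x)) w cv_h eps eps_gt0.
by exists d; split => // y; apply: dP.
Qed.

End ProfileExtension.

(** * Conformal Hessian of the canonical solutions *)

Lemma mmul_diag_mtr {n} (Q : mat n) (mu : pt n) i j :
  mmul (mmul Q (mdiag mu)) (mtr Q) i j = rsum (fun l => Q i l * mu l * Q j l).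
Proof.
apply: eq_rsum => l; rewrite /mmul /mtr.
rewrite (eq_rsum _ (fun k => (if k == l then 1 else 0) * (Q i k * mu k))) ?rsum_delta //.
by move=> k; rewrite /mdiag; case: (k == l); ring.
Qed.

Lemma eigvals_scalar {n} (kap : R) (mu : pt n) :
  is_eigvals (fun i j => kap * mid i j) mu -> forall a, mu a = kap.
Proof.
move=> [Q [QtQ M_eq]] a.
have orth b l : rsum (fun i => Q i b * Q i l) = mid b l by rewrite -QtQ.
(* evaluate the quadratic form of both sides of [M_eq] at the [a]-th column of [Q] *)
pose S (M : mat n) := rsum (fun i => rsum (fun j => Q i a * M i j * Q j a)).
have S_scalar : S (fun i j => kap * mid i j) = kap.
  rewrite /S (eq_rsum _ (fun i => kap * (Q i a * Q i a))).
    by rewrite rsum_scale orth /mid eqxx; ring.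
  move=> i; rewrite (eq_rsum _ (fun j => (if j == i then 1 else 0) * (kap * (Q i a * Q j a)))).
    by rewrite rsum_delta.
  by move=> j; rewrite /mid eq_sym; case: (i == j); ring.
have S_diag : S (mmul (mmul Q (mdiag mu)) (mtr Q)) = mu a.
  rewrite /S (eq_rsum _ (fun i => rsum (fun l => Q i a * Q i l * (mu l * mid l a)))).
    rewrite rsum_exchange (eq_rsum _ (fun l => (if l == a then 1 else 0) * mu l)).
      exact: rsum_delta.
    move=> l; rewrite (eq_rsum _ (fun i => mu l * mid l a * (Q i a * Q i l))).
      by rewrite rsum_scale orth /mid [a == l]eq_sym; case: (l == a); ring.
    by move=> i; ring.
  move=> i; rewrite (eq_rsum _ (fun j => rsum (fun l => Q i a * Q i l * mu l * (Q j l * Q j a)))).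
    by rewrite rsum_exchange; apply: eq_rsum => l; rewrite rsum_scale orth; ring.
  move=> j; rewrite mmul_diag_mtr [RHS](eq_rsum _ (fun l => Q i a * Q j a * (Q i l * mu l * Q j l))).
    by rewrite rsum_scale; ring.
  by move=> l; ring.
by rewrite -S_diag -M_eq S_scalar.
Qed.

Definition conf_exp (n : nat) : R := (INR n - 2) / 2.

Lemma conf_exp_gt0 {n} : (3 <= n)%nat -> 0 < conf_exp n.
Proof.
move=> /leP/le_INR; rewrite /conf_exp [INR 3]/= => n_ge3; lra.
Qed.

Lemma negA_radial_prof {n} (H H1 H2 : R -> R) c al Rr (y z : pt n) :
  (3 <= n)%nat -> 0 < al -> 0 < Rr -> 0 < c -> sqdist z y < Rr * Rr ->
  let m := conf_exp n in let t := sqdist z y in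
  H t = prof al Rr m t -> H1 t = prof1 al Rr m t -> H2 t = prof2 al Rr m t ->
  negA (radial H c y) (radial_grad H1 c y) (radial_hess H1 H2 c y) z =
    fun i j => 2 * Rpower (c * al) (- (2 / m)) * mid i j.
Proof.
move=> n_ge3 al_gt0 Rr_gt0 c_gt0 zy_lt m t Ht H1t H2t.
have m_gt0 : 0 < m := conf_exp_gt0 n_ge3.
have n_eq : INR n = 2 * m + 2 by rewrite /m /conf_exp; field.
have u_gt0 : 0 < c * prof al Rr m t by apply: Rmult_lt_0_compat => //; apply: prof_gt0.
have grad2 : dot (fun k => c * prof1 al Rr m t * (2 * (z k - y k)))
                 (fun k => c * prof1 al Rr m t * (2 * (z k - y k))) =
             4 * c * c * prof1 al Rr m t * prof1 al Rr m t * t.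
  rewrite /dot (eq_rsum _ (fun k => 4 * c * c * prof1 al Rr m t * prof1 al Rr m t *
                                  ((z k - y k) * (z k - y k)))) ?rsum_scale //.
  by move=> k; ring.
have pow1 : Rpower (c * prof al Rr m t) (- ((INR n + 2) / (INR n - 2))) =
    / (c * prof al Rr m t) * Rpower (c * prof al Rr m t) (- (2 / m)).
  by rewrite -Rpower_m1 // -Rpower_plus; congr Rpower; rewrite n_eq; field; lra.
have pow2 : Rpower (c * prof al Rr m t) (- (2 * INR n / (INR n - 2))) =
    / (c * prof al Rr m t * (c * prof al Rr m t)) * Rpower (c * prof al Rr m t) (- (2 / m)).
  by rewrite -Rpower_m2 // -Rpower_plus; congr Rpower; rewrite n_eq; field; lra.
apply: functional_extensionality => i; apply: functional_extensionality => j.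
rewrite /negA /conf_hess /radial /radial_grad /radial_hess -/t Ht H1t H2t grad2 pow1 pow2.
rewrite Rpower_scaled_prof // prof1_eq // prof2_eq // n_eq /mid.
have p_gt0 := prof_gt0 al Rr m t al_gt0; have w_gt0 : 0 < Rr * Rr - t by rewrite /t; lra.
by case: (i == j) => /=; field; repeat split; lra.
Qed.

Lemma negA_radial_prof_ext {n} al Rr T c (y z : pt n) :
  (3 <= n)%nat -> 0 < al -> 0 < Rr -> 0 < c -> T < Rr * Rr -> sqdist z y <= T ->
  let m := conf_exp n in
  negA (radial (prof_ext al Rr m T) c y) (radial_grad (prof_ext1 al Rr m T) c y)
       (radial_hess (prof_ext1 al Rr m T) (prof_ext2 al Rr m T) c y) z =
    fun i j => 2 * Rpower (c * al) (- (2 / m)) * mid i j.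
Proof.
move=> n_ge3 al_gt0 Rr_gt0 c_gt0 T_lt zy_le m.
apply: (negA_radial_prof _ _ _ c al Rr) => //; first lra.
all: exact: glue_left.
Qed.

Lemma partial_is_nbhd {n} (u v : pt n -> R) (x : pt n) r i w l :
  pdist w x < r -> (forall z, pdist z x < r -> u z = v z) ->
  partial_is u i w l -> partial_is v i w l.
Proof.
move=> wx uv; have [d [d_gt0 dP]] := pdist_nbhd x w r wx.
apply: (derivable_pt_lim_locally_ext _ _ 0 (- d) d); first lra.
by move=> t t_in; apply/uv/dP; rewrite pdist_line; split_Rabs; lra.
Qed.

Section CanonicalCenter.
Context {n : nat} (al Rr : R) (x : pt n).
Hypotheses (n_ge3 : (3 <= n)%nat) (al_gt0 : 0 < al) (Rr_gt0 : 0 < Rr).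
Let m := conf_exp n.

Lemma u_in_radial w : pdist w x < Rr -> u_in al Rr x w = radial (prof al Rr m) 1 x w.
Proof.
move=> wx; have w_gt0 : 0 < Rr * Rr - sqdist w x.
  by rewrite -pdist_sq; have := pdist_ge0 w x; nra.
rewrite /u_in /radial /prof pdist_sq /Rdiv -Rpower_mult_distr //; last exact: Rinv_0_lt_compat.
by rewrite Rpower_inv_base // /m /conf_exp /Rdiv; ring.
Qed.

Lemma u_in_grad Du D2u : C2_on (ball x Rr) (u_in al Rr x) Du D2u ->
  forall k w, pdist w x < Rr -> Du k w = radial_grad (prof1 al Rr m) 1 x k w.
Proof.
move=> [_ [u_partial _]] k w wx; apply: (uniqueness_limite _ _ _ _ (u_partial k w wx)).
apply: (partial_is_nbhd (radial (prof al Rr m) 1 x) _ x Rr) => // [z zx|].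
  by rewrite u_in_radial.
apply: radial_partial; apply: prof_derivable; rewrite -pdist_sq.
by have := pdist_ge0 w x; nra.
Qed.

Lemma negA_u_in_center Du D2u : C2_on (ball x Rr) (u_in al Rr x) Du D2u ->
  negA (u_in al Rr x) Du D2u x = fun i j => 2 * Rpower al (- (2 / m)) * mid i j.
Proof.
move=> u_C2; have x_in : pdist x x < Rr by rewrite pdist_refl.
have D2u_x k l : D2u k l x = radial_hess (prof1 al Rr m) (prof2 al Rr m) 1 x k l x.
  have [_ [_ [Du_partial _]]] := u_C2.
  apply: (uniqueness_limite _ _ _ _ (Du_partial k l x x_in)).
  apply: (partial_is_nbhd (radial_grad (prof1 al Rr m) 1 x k) _ x Rr) => // [z zx|].
    by rewrite (u_in_grad _ _ u_C2).
  by apply: radial_grad_partial; apply: prof1_derivable; rewrite sqdist_refl; nra.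
have -> : negA (u_in al Rr x) Du D2u x =
    negA (radial (prof al Rr m) 1 x) (radial_grad (prof1 al Rr m) 1 x)
         (radial_hess (prof1 al Rr m) (prof2 al Rr m) 1 x) x.
  have Du_x : (fun k => Du k x) = (fun k => radial_grad (prof1 al Rr m) 1 x k x).
    by apply: functional_extensionality => k; apply: (u_in_grad _ _ u_C2).
  have D2u_x' : (fun k l => D2u k l x) =
      (fun k l => radial_hess (prof1 al Rr m) (prof2 al Rr m) 1 x k l x).
    by do 2 apply: functional_extensionality => ?; apply: D2u_x.
  by rewrite /negA u_in_radial // Du_x D2u_x'.
rewrite (negA_radial_prof _ _ _ 1 al Rr x x) //; try lra.
- by rewrite Rmult_1_l.
- by rewrite sqdist_refl; nra.
Qed.

End CanonicalCenter.

Lemma canonical_const_center {n} (f : pt n -> R) al : (3 <= n)%nat -> canonical_const f al ->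
  f (fun _ => 2 * Rpower al (- (2 / conf_exp n))) = 1.
Proof.
move=> n_ge3 [al_gt0 canon]; pose x : pt n := fun _ => 0.
have [[Du [D2u [u_C2 u_eig]]] _] := canon 1 x Rlt_0_1.
have [mu [mu_eig f_mu]] := u_eig x ltac:(by rewrite /ball pdist_refl; lra).
rewrite (negA_u_in_center al 1 x) // in mu_eig; last lra.
by rewrite -f_mu; congr f; apply: functional_extensionality => i; rewrite (eigvals_scalar _ _ mu_eig).
Qed.

Lemma structural_scale_gt1 {n} (f : pt n -> R) G deg t mu : structural f G deg ->
  1 < t -> closure G mu -> f mu >= 1 -> 1 < f (ptscal t mu).
Proof.
move=> [_ [_ [_ [_ [_ [_ [_ [_ [_ [_ [deg_gt0 f_hom]]]]]]]]]]] t_gt1 mu_cl f_mu.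
rewrite f_hom //; last lra.
by have := Rpower_gt1 t deg t_gt1 deg_gt0; nra.
Qed.

Lemma f_canonical_multiple_lt1 {n} (f : pt n -> R) G deg al c (mu : pt n) :
  (3 <= n)%nat -> structural f G deg -> canonical_const f al -> 1 < c ->
  (forall i, mu i = 2 * Rpower (c * al) (- (2 / conf_exp n))) -> closure G mu -> f mu < 1.
Proof.
move=> n_ge3 f_str al_can c_gt1 mu_eq mu_cl; apply: Rnot_le_lt => f_mu.
have al_gt0 : 0 < al := proj1 al_can.
have t_gt1 : 1 < Rpower c (2 / conf_exp n).
  by apply: Rpower_gt1 => //; apply: Rdiv_lt_0_compat; [lra | apply: conf_exp_gt0].
have := structural_scale_gt1 f G deg _ mu f_str t_gt1 mu_cl (Rle_ge _ _ f_mu).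
suff -> : ptscal (Rpower c (2 / conf_exp n)) mu = fun _ => 2 * Rpower al (- (2 / conf_exp n)).
  by rewrite canonical_const_center //; lra.
apply: functional_extensionality => i; rewrite /ptscal mu_eq.
rewrite -Rpower_mult_distr ?Rpower_Ropp; try lra.
by field; split; apply/Rgt_not_eq/Rpower_gt0.
Qed.

(** * The comparison argument *)

Section Touching.
Context {n : nat} (v : pt n -> R) (x : pt n) (al Rp : R).
Let m := conf_exp n.
Hypotheses (n_ge3 : (3 <= n)%nat) (al_gt0 : 0 < al) (Rp_gt0 : 0 < Rp)
  (v_gt0 : forall w, cball x Rp w -> 0 < v w)
  (v_usc : forall w, cball x Rp w -> usc_in (cball x Rp) v w)
  (v_big : al < Rpower Rp m * v x).

Lemma canonical_touches_above : exists c T z, 1 < c /\ T < Rp * Rp /\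
  sqdist z x <= T /\ pdist z x < Rp /\ v z = radial (prof_ext al Rp m T) c x z /\
  exists2 d, 0 < d & forall y, pdist y z < d -> v y <= radial (prof_ext al Rp m T) c x y.
Proof.
have m_gt0 : 0 < m := conf_exp_gt0 n_ge3.
have [zM _ v_le_M] := usc_cball_max v x Rp v_usc (Rlt_le _ _ Rp_gt0).
set q0 := v x / prof al Rp m 0.
have q0_gt1 : 1 < q0.
  have A_gt0 := Rpower_gt0 Rp m.
  have -> : q0 = Rpower Rp m * v x / al by rewrite /q0 prof_at0 //; field; lra.
  by apply: (Rmult_lt_reg_r al) => //; rewrite /Rdiv Rmult_assoc Rinv_l; lra.
(* [R1] is chosen so that [v / h] is smaller on the sphere of radius [R1] than at [x] *)
have [R1 [[R1_gt0 R1_lt] R1_big]] := prof_unbounded al Rp m (v zM / q0) al_gt0 Rp_gt0 m_gt0.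
pose T := (R1 * R1 + Rp * Rp) / 2; have T_lt : T < Rp * Rp by rewrite /T; nra.
have sub_ball y : cball x R1 y -> cball x Rp y by rewrite /cball; lra.
pose h y := prof_ext al Rp m T (sqdist y x).
have h_prof y : cball x R1 y -> h y = prof al Rp m (sqdist y x).
  move=> y_in; apply: glue_left.
  by have := sqdist_le y x R1 (Rlt_le _ _ R1_gt0) y_in; rewrite /T; nra.
have h_gt0 y : cball x R1 y -> 0 < h y by move=> y_in; rewrite h_prof //; apply: prof_gt0.
have hx : h x = prof al Rp m 0 by rewrite h_prof ?sqdist_refl // /cball pdist_refl; lra.
have sphere_lt w : pdist w x = R1 -> v w / h w < v x / h x.
  move=> w_sphere; have w_in : cball x R1 w by rewrite /cball w_sphere; lra.
  have hw : h w = prof al Rp m (R1 * R1) by rewrite h_prof // -pdist_sq w_sphere.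
  rewrite hx -/q0 Rdiv_lt_iff; last exact: h_gt0.
  move: R1_big; rewrite -hw Rdiv_lt_iff; last lra.
  by have := v_le_M w (sub_ball w w_in); nra.
have [z [z_in z_max]] := usc_ratio_max_interior v h x R1 R1_gt0
  (fun w w_in => conj (v_gt0 w (sub_ball w w_in)) (h_gt0 w w_in))
  (fun w w_in => usc_in_sub _ _ _ _ sub_ball (v_usc w (sub_ball w w_in)))
  (radial_prof_ext_cont_at al Rp m T T_lt x) sphere_lt.
have z_in' : cball x R1 z by rewrite /cball; lra.
have q0_le : q0 <= v z / h z by rewrite /q0 -hx; apply: z_max; rewrite /cball pdist_refl; lra.
exists (v z / h z), T, z; split; first lra.
split=> //; split; first by have := sqdist_le z x R1 (Rlt_le _ _ R1_gt0) z_in'; rewrite /T; nra.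
split; first lra.
split; first by rewrite /radial -/(h z); field; have := h_gt0 z z_in'; lra.
exact: ratio_max_touches z_in h_gt0 z_max.
Qed.

End Touching.

Theorem lemma3p1 (n : nat) (Hn : (3 <= n)%nat)
    (f : pt n -> R) (G : pt n -> Prop) (deg : R) (Hstr : structural f G deg)
    (alpha : R) (Halpha : canonical_const f alpha)
    (Om : pt n -> Prop) (HOm : is_domain Om)
    (v : pt n -> R) (Hvpos : forall x, Om x -> 0 < v x) (Hvusc : usc_on Om v)
    (Hsub : visc_subsol f G Om v) :
  forall x, Om x -> forall r, 0 < r -> (forall y, pdist y x < r -> Om y) ->
    Rpower r ((INR n - 2) / 2) * v x <= alpha.
Proof.
move=> x x_in r r_gt0 ball_r; rewrite -/(conf_exp n); set m := conf_exp n.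
have al_gt0 : 0 < alpha := proj1 Halpha.
apply: Rnot_lt_le => v_big.
have [Rp [[Rp_gt0 Rp_lt] v_big']] :=
  Rpower_gap _ _ _ _ al_gt0 (Hvpos x x_in) r_gt0 (conf_exp_gt0 Hn) v_big.
have cball_Om w : cball x Rp w -> Om w by rewrite /cball => w_in; apply: ball_r; lra.
have [c [T [z [c_gt1 [T_lt [zT [z_in [vz [d d_gt0 v_le]]]]]]]]] :=
  canonical_touches_above v x alpha Rp Hn al_gt0 Rp_gt0
    (fun w w_in => Hvpos w (cball_Om w w_in))
    (fun w w_in => usc_in_sub _ _ _ _ cball_Om (Hvusc w (cball_Om w w_in))) v_big'.
have touch : v z - radial (prof_ext alpha Rp m T) c x z = 0 by rewrite vz Rminus_diag.
have [mu [mu_eig [mu_cl f_mu]]] := Hsub z _ _ _ (cball_Om z (Rlt_le _ _ z_in))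
  (radial_prof_ext_C2 alpha Rp m T T_lt Om c x) touch
  (ex_intro _ d (conj d_gt0 (fun y _ yz => Rle_minus _ _ (v_le y yz)))).
rewrite negA_radial_prof_ext // in mu_eig; try lra.
have := f_canonical_multiple_lt1 f G deg alpha c mu Hn Hstr Halpha c_gt1
  (eigvals_scalar _ _ mu_eig) mu_cl.
lra.
Qed.
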